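(* Let $1\le p<\infty$. For each $k\ge1$ define the sequence $b^{(k)}=(b^{(k)}_n)_{n\ge1}$ by $b^{(k)}_n=1/k$ if $n\le k$ and $b^{(k)}_n=0$ if $n>k$. Then $(b^{(k)})_{k\ge1}$ is a Schauder basis of $h_p$ (with norm $\|x\|_{h_p}=(\sum_{k\ge1}|k\Delta x_k|^p)^{1/p}$). Moreover, every $x\in h_p$ has a unique representation $$x=\sum_k\lambda_k b^{(k)},\qquad\text{where } \lambda_k=(Mx)_k=k(x_k-x_{k+1}) \text{ for all } k.$$
   Context: Sequences are complex sequences $x=(x_k)_{k\ge1}$, and $\Delta x_k=x_k-x_{k+1}$. For $1\le p<\infty$, $$h_p=\Big\{x:\ \sum_{k=1}^{\infty}(k|\Delta x_k|)^p<\infty,\ \lim_k x_k=0\Big\}.$$ For $p=1$ this is the Hahn space $h$. $M$ is the matrix with $(Mx)_k=k(x_k-x_{k+1})$. A Schauder basis $(b^{(k)})$ of a normed sequence space $\lambda$ is a sequence such that every $x\in\lambda$ has a unique scalar sequence $(\alpha_k)$ with $\|x-\sum_{k\le n}\alpha_kb^{(k)}\|\to0$ as $n\to\infty$. *)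

From Stdlib Require Import Reals.
From Coquelicot Require Import Coquelicot.
Open Scope R_scope.

(* Sequences x = (x_1, x_2, ...) are represented 0-based:
   the Rocq term (x : nat -> C) has  x n  = x_{n+1}. *)
Definition cseq := nat -> C.

(* Real power with the convention 0^a = 0 (Rpower is only meaningful for x>0). *)
Definition rpow (x a : R) : R :=
  if Req_EM_T x 0 then 0 else Rpower x a.

Definition Delta (x : cseq) : cseq := fun n => Cminus (x n) (x (S n)).

Definition Mop (x : cseq) : cseq := fun n => Cmult (RtoC (INR (S n))) (Delta x n).

Definition hp_term (p : R) (x : cseq) : nat -> R :=
  fun n => rpow (INR (S n) * Cmod (Delta x n)) p.

Definition in_hp (p : R) (x : cseq) : Prop :=
  ex_series (hp_term p x) /\ is_lim_seq (fun n => Cmod (x n)) 0.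

Definition hp_norm (p : R) (x : cseq) : R :=
  rpow (Series (hp_term p x)) (/ p).

Definition bvec (k : nat) : cseq :=
  fun n => if Nat.leb n k then RtoC (/ INR (S k)) else RtoC 0.

Definition partial_comb (alpha : cseq) (bs : nat -> cseq) (N : nat) : cseq :=
  fun n => sum_n (fun k => Cmult (alpha k) (bs k n)) N.

Definition csub (x y : cseq) : cseq := fun n => Cminus (x n) (y n).

Definition hp_represents (p : R) (bs : nat -> cseq) (alpha : cseq) (x : cseq) : Prop :=
  is_lim_seq (fun N => hp_norm p (csub x (partial_comb alpha bs N))) 0.

Definition is_schauder_basis_hp (p : R) (bs : nat -> cseq) : Prop :=
  (forall k, in_hp p (bs k)) /\
  (forall x, in_hp p x -> exists! alpha : cseq, hp_represents p bs alpha x).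

(* The operator M inverts the basis: since k (b^(k)_k - b^(k)_(k+1)) = 1 and
   b^(k) is constant elsewhere, M b^(k) is the k-th unit vector, so
   M (sum_{k<=N} a_k b^(k)) is the truncation of a at N.  As ||y||^p is the
   sum of |(My)_n|^p, the p-th power of the distance from x to the N-th
   partial sum is the sum over n <= N of |(Mx)_n - a_n|^p plus the tail of
   the convergent series sum |(Mx)_n|^p.  For a = Mx only the tail is left,
   which tends to 0; for any other a the n-th term with a_n <> (Mx)_n bounds
   the distance away from 0 once N >= n. *)
From Pilot Require Import Defs.
From Stdlib Require Import Reals Lra Lia FunctionalExtensionality.
From Coquelicot Require Import Coquelicot.
Open Scope R_scope.

Lemma rpow_ge0 x a : 0 <= rpow x a.
Proof. unfold rpow; destruct Req_EM_T; [lra | left; apply exp_pos]. Qed.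

Lemma rpow_0l a : rpow 0 a = 0.
Proof. unfold rpow; destruct Req_EM_T; [reflexivity | lra]. Qed.

Lemma rpow_gt0 x a : 0 < x -> 0 < rpow x a.
Proof. intros; unfold rpow; destruct Req_EM_T; [lra | apply exp_pos]. Qed.

Lemma rpowK x a : 0 <= x -> a <> 0 -> rpow (rpow x a) (/ a) = x.
Proof.
  intros Hx Ha. destruct (Req_dec x 0) as [->|Hx0]; [rewrite !rpow_0l; reflexivity|].
  assert (Hxa : 0 < rpow x a) by (apply rpow_gt0; lra).
  unfold rpow at 2; destruct Req_EM_T; [lra|].
  unfold rpow; destruct Req_EM_T; [pose proof (exp_pos (a * ln x)); unfold Rpower in *; lra|].
  rewrite Rpower_mult, Rinv_r, Rpower_1 by lra. reflexivity.
Qed.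

Lemma is_lim_seq_rpow_0 (u : nat -> R) a :
  0 < a -> (forall n, 0 <= u n) -> is_lim_seq u 0 -> is_lim_seq (fun n => rpow (u n) a) 0.
Proof.
  intros Ha Hu Hlim. apply is_lim_seq_spec in Hlim. apply is_lim_seq_spec.
  intros eps. destruct (Hlim (mkposreal (Rpower eps (/ a)) (exp_pos _))) as [M HM].
  exists M; intros n Hn. specialize (HM n Hn); simpl in HM.
  rewrite Rminus_0_r, Rabs_pos_eq in HM by apply Hu.
  rewrite Rminus_0_r, Rabs_pos_eq by apply rpow_ge0.
  pose proof (cond_pos eps).
  unfold rpow; destruct Req_EM_T; [lra|].
  replace (pos eps) with (Rpower (Rpower eps (/ a)) a)
    by (rewrite Rpower_mult, Rinv_l, Rpower_1; lra).
  apply Rlt_Rpower_l; [lra|]. specialize (Hu n). lra.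
Qed.

Lemma is_lim_seq_rpow_0_iff (u : nat -> R) a :
  0 < a -> (forall n, 0 <= u n) ->
  is_lim_seq (fun n => rpow (u n) a) 0 <-> is_lim_seq u 0.
Proof.
  intros Ha Hu; split; [|now apply is_lim_seq_rpow_0].
  intros Hlim. apply (is_lim_seq_ext (fun n => rpow (rpow (u n) a) (/ a))).
  { intros n; apply rpowK; [apply Hu | lra]. }
  apply is_lim_seq_rpow_0; [now apply Rinv_0_lt_compat | intros; apply rpow_ge0 | exact Hlim].
Qed.

Lemma Series_ge0 (a : nat -> R) : (forall n, 0 <= a n) -> ex_series a -> 0 <= Series a.
Proof.
  intros Ha Hs. replace 0 with (Series (fun _ => 0)).
  - apply Series_le; [intros n; specialize (Ha n); lra | exact Hs].
  - rewrite (Series_ext _ (fun n => 0 * a n)) by (intros; ring).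
    rewrite Series_scal_l; ring.
Qed.

Lemma Series_ge_term (a : nat -> R) j :
  (forall n, 0 <= a n) -> ex_series a -> a j <= Series a.
Proof.
  intros Ha Hs. rewrite (Series_incr_n a (S j)) by (lia || exact Hs). simpl Nat.pred.
  assert (a j <= sum_f_R0 a j).
  { destruct j; simpl; [lra|]. pose proof (cond_pos_sum a j Ha). lra. }
  assert (0 <= Series (fun k => a (S j + k)%nat)).
  { apply Series_ge0; [intros; apply Ha | now apply ex_series_incr_n]. }
  lra.
Qed.

Lemma ex_series_eventually_eq (a b : nat -> R) N :
  (forall n, (N < n)%nat -> b n = a n) -> ex_series a -> ex_series b.
Proof.
  intros Hab Ha. apply (ex_series_incr_n b (S N)).
  apply (ex_series_ext (fun k => a (S N + k)%nat)).
  - intros k; symmetry; apply Hab; lia.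
  - now apply ex_series_incr_n.
Qed.

Lemma Series_eventually_eq (a b : nat -> R) N :
  (forall n, (N < n)%nat -> b n = a n) -> ex_series a ->
  Series b = sum_f_R0 b N + Series (fun k => a (S N + k)%nat).
Proof.
  intros Hab Ha.
  rewrite (Series_incr_n b (S N)) by (lia || now apply (ex_series_eventually_eq a b N)).
  simpl Nat.pred. f_equal. apply Series_ext; intros k; apply Hab; lia.
Qed.

Lemma is_lim_seq_Series_tail (a : nat -> R) :
  ex_series a -> is_lim_seq (fun N => Series (fun k => a (S N + k)%nat)) 0.
Proof.
  intros Ha. apply (is_lim_seq_ext (fun N => Series a - sum_f_R0 a N)).
  { intros N. rewrite (Series_incr_n a (S N)) by (lia || exact Ha). simpl Nat.pred. ring. }
  replace (Finite 0) with (Finite (Series a - Series a)) by (f_equal; ring).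
  apply is_lim_seq_minus'; [apply is_lim_seq_const|].
  apply (is_lim_seq_ext (sum_n a)); [intros; apply sum_n_Reals|].
  exact (Series_correct a Ha).
Qed.

Lemma Mop_csub x y n : Mop (csub x y) n = Cminus (Mop x n) (Mop y n).
Proof. unfold Mop, Defs.Delta, csub. ring. Qed.

Lemma Mop_bvec k n : Mop (bvec k) n = if Nat.eqb n k then RtoC 1 else RtoC 0.
Proof.
  unfold Mop, Defs.Delta, bvec. rewrite !S_INR. pose proof (pos_INR k).
  destruct (Nat.eqb_spec n k) as [->|Hnk].
  - rewrite Nat.leb_refl. replace (Nat.leb (S k) k) with false by (symmetry; apply Nat.leb_gt; lia).
    apply injective_projections; simpl; field; lra.
  - destruct (Nat.leb_spec n k), (Nat.leb_spec (S n) k); try lia; ring.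
Qed.

Lemma Mop_partial_comb alpha bs N n :
  Mop (partial_comb alpha bs N) n = sum_n (fun k => Cmult (alpha k) (Mop (bs k) n)) N.
Proof.
  unfold Mop, Defs.Delta, partial_comb. induction N as [|N IH].
  - rewrite !sum_O. ring.
  - rewrite !sum_Sn, <- IH. change plus with Cplus. ring.
Qed.

(* Oriented with the sum on the right so that the equation is stated in [C]
   rather than in the carrier of [C_AbelianMonoid], where [ring] fails. *)
Lemma sum_n_mult_delta (a : cseq) n N :
  (if Nat.leb n N then a n else RtoC 0) =
  sum_n (fun k => Cmult (a k) (if Nat.eqb n k then RtoC 1 else RtoC 0)) N.
Proof.
  induction N as [|N IH].
  - rewrite sum_O. destruct n; simpl; ring.
  - rewrite sum_Sn, <- IH. change plus with Cplus.
    destruct (Nat.leb_spec n N), (Nat.leb_spec n (S N)), (Nat.eqb_spec n (S N));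
      try lia; subst; ring.
Qed.

Lemma Mop_partial_comb_bvec alpha N n :
  Mop (partial_comb alpha bvec N) n = if Nat.leb n N then alpha n else RtoC 0.
Proof.
  rewrite Mop_partial_comb, sum_n_mult_delta.
  apply sum_n_ext; intros k; rewrite Mop_bvec; reflexivity.
Qed.

Lemma hp_term_Mop p x n : hp_term p x n = rpow (Cmod (Mop x n)) p.
Proof.
  unfold hp_term, Mop. rewrite Cmod_mult, Cmod_R, Rabs_pos_eq by apply pos_INR.
  reflexivity.
Qed.

Lemma in_hp_bvec p k : in_hp p (bvec k).
Proof.
  split.
  - apply (ex_series_eventually_eq (fun _ => 0) _ k).
    + intros n Hn. rewrite hp_term_Mop, Mop_bvec.
      replace (Nat.eqb n k) with false by (symmetry; apply Nat.eqb_neq; lia).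
      rewrite Cmod_0; apply rpow_0l.
    + exists 0. apply (filterlim_ext (fun _ => 0)); [|apply filterlim_const].
      intros N; rewrite sum_n_const; simpl; ring.
  - apply (is_lim_seq_ext_loc (fun _ => 0)); [|apply is_lim_seq_const].
    exists (S k); intros n Hn. unfold bvec.
    replace (Nat.leb n k) with false by (symmetry; apply Nat.leb_gt; lia).
    now rewrite Cmod_0.
Qed.

Section Representation.

Variables (p : R) (x : cseq).
Hypotheses (hp : 0 < p) (Hx : in_hp p x).

Let residual alpha N := hp_term p (csub x (partial_comb alpha bvec N)).

Lemma residualE alpha N n :
  residual alpha N n = rpow (Cmod (Cminus (Mop x n) (if Nat.leb n N then alpha n else RtoC 0))) p.
Proof. unfold residual. now rewrite hp_term_Mop, Mop_csub, Mop_partial_comb_bvec. Qed.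

Lemma residual_tail alpha N n : (N < n)%nat -> residual alpha N n = hp_term p x n.
Proof.
  intros Hn. rewrite residualE, hp_term_Mop.
  replace (Nat.leb n N) with false by (symmetry; apply Nat.leb_gt; lia).
  f_equal; f_equal; ring.
Qed.

Lemma ex_series_residual alpha N : ex_series (residual alpha N).
Proof. exact (ex_series_eventually_eq _ _ N (residual_tail alpha N) (proj1 Hx)). Qed.

Lemma hp_represents_iff alpha :
  hp_represents p bvec alpha x <-> is_lim_seq (fun N => Series (residual alpha N)) 0.
Proof.
  apply is_lim_seq_rpow_0_iff; [now apply Rinv_0_lt_compat|].
  intros N; apply Series_ge0; [intros; apply rpow_ge0 | apply ex_series_residual].
Qed.

Lemma hp_represents_Mop : hp_represents p bvec (Mop x) x.
Proof.
  apply hp_represents_iff.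
  apply (is_lim_seq_ext (fun N => Series (fun k => hp_term p x (S N + k)%nat))).
  - intros N. rewrite (Series_eventually_eq _ _ N (residual_tail (Mop x) N) (proj1 Hx)).
    assert (Hhead : sum_f_R0 (residual (Mop x) N) N = 0).
    { rewrite <- sum_n_Reals.
      transitivity (sum_n (fun _ => 0) N); [|rewrite sum_n_const; apply Rmult_0_r].
      apply sum_n_ext_loc; intros n Hn. rewrite residualE.
      replace (Nat.leb n N) with true by (symmetry; apply Nat.leb_le; lia).
      replace (Cminus (Mop x n) (Mop x n)) with (RtoC 0) by ring.
      rewrite Cmod_0; apply rpow_0l. }
    rewrite Hhead; ring.
  - apply is_lim_seq_Series_tail, Hx.
Qed.

Lemma hp_represents_coef alpha k : hp_represents p bvec alpha x -> alpha k = Mop x k.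
Proof.
  intros Hrep. apply hp_represents_iff in Hrep.
  set (d := Cminus (Mop x k) (alpha k)).
  assert (Hbound : rpow (Cmod d) p <= 0).
  { refine (is_lim_seq_le_loc (fun _ => rpow (Cmod d) p) _ _ _ _ (is_lim_seq_const _) Hrep).
    exists k; intros N HN. replace (rpow (Cmod d) p) with (residual alpha N k).
    - apply Series_ge_term; [intros; apply rpow_ge0 | apply ex_series_residual].
    - rewrite residualE. now replace (Nat.leb k N) with true by (symmetry; apply Nat.leb_le; lia). }
  destruct (Rle_lt_or_eq_dec _ _ (Cmod_ge_0 d)) as [Hd|Hd].
  - pose proof (rpow_gt0 _ p Hd). lra.
  - apply eq_sym, Cmod_eq_0 in Hd. unfold d in Hd.
    replace (alpha k) with (Cminus (Mop x k) (Cminus (Mop x k) (alpha k))) by ring.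
    rewrite Hd. ring.
Qed.

End Representation.

Theorem theorem2p5 (p : R) (hp : 1 <= p) :
  is_schauder_basis_hp p bvec /\
  (forall x : cseq, in_hp p x ->
     forall alpha : cseq,
       hp_represents p bvec alpha x <-> (forall k, alpha k = Mop x k)).
Proof.
  assert (hp0 : 0 < p) by lra.
  assert (Hcoef : forall x, in_hp p x -> forall alpha,
            hp_represents p bvec alpha x <-> (forall k, alpha k = Mop x k)).
  { intros x Hx alpha; split.
    - intros Hrep k; exact (hp_represents_coef p x hp0 Hx alpha k Hrep).
    - intros Halpha. replace alpha with (Mop x) by (extensionality k; auto).
      now apply hp_represents_Mop. }
  split; [split|exact Hcoef].
  - apply in_hp_bvec.
  - intros x Hx. exists (Mop x); split; [now apply hp_represents_Mop|].
    intros alpha Hrep. extensionality k. symmetry. now apply (Hcoef x Hx).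
Qed.
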